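(* For every integer $n \ge 7$, the integer $\left\lfloor n^2/5 \right\rfloor$ is composite. *)

From mathcomp Require Import all_boot.
Definition composite (m : nat) : Prop := 1 < m /\ ~~ prime m.

From mathcomp Require Import all_boot.
From mathcomp Require Import zify.

(* Writing n = 5k + r, the quotient of n^2 = 25k^2 + 10kr + r^2 by 5 is
   5k^2 + 2kr + r^2 %/ 5, which factors for each residue r:
   5 * k^2, k (5k + 2), k (5k + 4), (5k + 1)(k + 1) and (5k + 3)(k + 1).
   For n >= 7 both factors exceed 1, except for n = 7 where 49 %/ 5 = 9 = 3 * 3. *)

Lemma composite_mul a b : 1 < a -> 1 < b -> composite (a * b).
Proof.
move=> a_gt1 b_gt1; split; first by nia.
apply/negP => /primeP [_ prime_div].
by have /orP[] := prime_div a (dvdn_mulr b (dvdnn a)) => /eqP; nia.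
Qed.

Lemma divnMDl_small q d s : s < d -> (q * d + s) %/ d = q.
Proof. by move=> s_lt_d; rewrite divnMDl ?divn_small ?addn0 //; case: d s_lt_d. Qed.

Lemma sqr_div5_factorization n :
  7 <= n -> exists a b, [/\ 1 < a, 1 < b & n ^ 2 %/ 5 = a * b].
Proof.
move=> n_ge7; have def_n := divn_eq n 5.
have : n %% 5 < 5 by rewrite ltn_mod.
move: (n %/ 5) (n %% 5) def_n => k [|[|[|[|[|r]]]]] def_n // _.
- exists 5, (k * k); split; [by [] | nia |].
  by rewrite (_ : n ^ 2 = 5 * (k * k) * 5 + 0) ?divnMDl_small //; nia.
- exists k, (5 * k + 2); split; [nia | nia |].
  by rewrite (_ : n ^ 2 = k * (5 * k + 2) * 5 + 1) ?divnMDl_small //; nia.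
- have [k_eq1 | k_gt1] : k = 1 \/ 1 < k by lia.
  + exists 3, 3; split=> //.
    by rewrite (_ : n = 7) //; lia.
  + exists k, (5 * k + 4); split; [nia | nia |].
    by rewrite (_ : n ^ 2 = k * (5 * k + 4) * 5 + 4) ?divnMDl_small //; nia.
- exists (5 * k + 1), (k + 1); split; [nia | nia |].
  by rewrite (_ : n ^ 2 = (5 * k + 1) * (k + 1) * 5 + 4) ?divnMDl_small //; nia.
- exists (5 * k + 3), (k + 1); split; [nia | nia |].
  by rewrite (_ : n ^ 2 = (5 * k + 3) * (k + 1) * 5 + 1) ?divnMDl_small //; nia.
Qed.

Theorem mainTheorem1 : forall n : nat, 7 <= n -> composite (n ^ 2 %/ 5).
Proof.
move=> n /sqr_div5_factorization [a [b [a_gt1 b_gt1 ->]]].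
exact: composite_mul.
Qed.
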